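(* Let $\kappa$ be an uncountable regular cardinal and let $\mathcal{I}$ be a $\kappa$-complete proper ideal on $\kappa$ containing every bounded subset of $\kappa$, and suppose $\mathcal{I}$ contains an unbounded subset of $\kappa$. Let $\nu\in\{2,\kappa\}$. Then every subset of ${}^{\kappa}\nu$ is $\mathcal{I}$-analytic.
   Context: Work in ZFC. For $\mu\in\{2,\kappa\}$, ${}^{\kappa}\mu$ is the set of functions $\kappa\to\mu$. For $f\colon D\to\mu$ with $D\in\mathcal{I}$ let $\mathbf{N}_f=\{x\in{}^{\kappa}\mu: f\subseteq x\}$; the $\mathcal{I}$-topology $\tau_{\mathcal{I}}$ on ${}^{\kappa}\mu$ is generated by these sets. A function ${}^{\kappa}\kappa\to{}^{\kappa}\nu$ is $\mathcal{I}$-continuous if it is continuous when both spaces carry $\tau_{\mathcal{I}}$. A set $A\subseteq{}^{\kappa}\nu$ is $\mathcal{I}$-analytic if either $A=\emptyset$ or there are a $\tau_{\mathcal{I}}$-closed set $C\subseteq{}^{\kappa}\kappa$ and an $\mathcal{I}$-continuous function $\Phi\colon{}^{\kappa}\kappa\to{}^{\kappa}\nu$ with $\Phi(C)=A$. *)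

From Stdlib Require Import Classical.

(* The cardinal kappa is represented by a type [K] with a strict well-order
   [lt] whose order type is an initial ordinal. *)

Definition injective {A B : Type} (f : A -> B) : Prop :=
  forall x y, f x = f y -> x = y.

Definition strict_well_order {K : Type} (lt : K -> K -> Prop) : Prop :=
  (forall a, ~ lt a a) /\
  (forall a b c, lt a b -> lt b c -> lt a c) /\
  (forall a b, lt a b \/ a = b \/ lt b a) /\
  well_founded lt.

(* |A| < |K| for A a subset of K: K does not inject into A. *)
Definition small {K : Type} (A : K -> Prop) : Prop :=
  ~ exists f : K -> K, (forall x, A (f x)) /\ injective f.

Definition bounded {K : Type} (lt : K -> K -> Prop) (A : K -> Prop) : Prop :=
  exists a, forall b, A b -> lt b a.

Definition uncountable_regular_cardinal {K : Type} (lt : K -> K -> Prop) : Prop :=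
  strict_well_order lt /\
  (* initial ordinal: every proper initial segment has smaller cardinality *)
  (forall a, small (fun b => lt b a)) /\
  (~ exists f : K -> nat, injective f) /\
  (forall A : K -> Prop, small A -> bounded lt A).

Definition kappa_complete_proper_ideal {K : Type} (lt : K -> K -> Prop)
  (I : (K -> Prop) -> Prop) : Prop :=
  I (fun _ => False) /\
  (forall A B : K -> Prop, I A -> (forall x, B x -> A x) -> I B) /\
  (forall A B : K -> Prop, I A -> I B -> I (fun x => A x \/ B x)) /\
  ~ I (fun _ => True) /\
  (* kappa-complete: unions of fewer than kappa members (families indexed
     by a subset J of kappa with |J| < kappa) *)
  (forall (J : K -> Prop) (F : K -> K -> Prop),
      small J -> (forall j, J j -> I (F j)) ->
      I (fun x => exists j, J j /\ F j x)) /\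
  (forall A : K -> Prop, bounded lt A -> I A).

(* Basic open set N_f for f = x|D, D in I. *)
Definition basic_nbhd {K Y : Type} (D : K -> Prop) (x : K -> Y) : (K -> Y) -> Prop :=
  fun z => forall a, D a -> z a = x a.

(* I-topology on ^kappa Y: the topology generated by the N_f, f : D -> Y,
   D in I.  Since these sets are closed under finite intersections (I is
   closed under finite unions) they form a base, so U is open iff each
   point of U has a basic neighbourhood inside U. *)
Definition I_open {K Y : Type} (I : (K -> Prop) -> Prop) (U : (K -> Y) -> Prop) : Prop :=
  forall x, U x -> exists D, I D /\ forall z, basic_nbhd D x z -> U z.

Definition I_closed {K Y : Type} (I : (K -> Prop) -> Prop) (C : (K -> Y) -> Prop) : Prop :=
  I_open I (fun z => ~ C z).

Definition I_continuous {K Y : Type} (I : (K -> Prop) -> Prop)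
  (Phi : (K -> K) -> (K -> Y)) : Prop :=
  forall U : (K -> Y) -> Prop, I_open I U -> I_open I (fun x => U (Phi x)).

Definition I_analytic {K Y : Type} (I : (K -> Prop) -> Prop) (A : (K -> Y) -> Prop) : Prop :=
  (forall y, ~ A y) \/
  exists (C : (K -> K) -> Prop) (Phi : (K -> K) -> (K -> Y)),
    I_closed I C /\ I_continuous I Phi /\
    (forall y, A y <-> exists x, C x /\ Phi x = y).

From Stdlib Require Import Classical ClassicalEpsilon FunctionalExtensionality.

(* An unbounded set D in I has size kappa by regularity, so there is an
   injection e of kappa into D, and for a surjection r : kappa -> nu the map
   x |-> r o x o e sends ^kappa kappa onto ^kappa nu while reading only the
   coordinates in D.
   A map depending only on the coordinates in a set of I is locally constant
   for the I-topology, hence continuous; composing with a retraction onto A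
   exhibits any nonempty A as a continuous image of the closed set ^kappa kappa. *)

Definition depends_only_on {K X Z : Type} (D : K -> Prop) (g : (K -> X) -> Z) : Prop :=
  forall x z, basic_nbhd D x z -> g z = g x.

Lemma depends_only_on_comp {K X Z W : Type} (D : K -> Prop)
    (g : (K -> X) -> Z) (h : Z -> W) :
  depends_only_on D g -> depends_only_on D (fun x => h (g x)).
Proof. intros Hg x z Hxz. now rewrite (Hg x z Hxz). Qed.

Lemma I_closed_full {K X : Type} (I : (K -> Prop) -> Prop) :
  I_closed I (fun _ : K -> X => True).
Proof. intros x Hx. contradiction (Hx Logic.I). Qed.

Lemma I_continuous_of_depends_only_on {K Y : Type} (I : (K -> Prop) -> Prop)
    (D : K -> Prop) (Phi : (K -> K) -> (K -> Y)) :
  I D -> depends_only_on D Phi -> I_continuous I Phi.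
Proof.
  intros HD HPhi U _ x Hx.
  exists D; split; [exact HD|].
  intros z Hxz. now rewrite (HPhi x z Hxz).
Qed.

Lemma I_analytic_of_surjective_map {K Y : Type} (I : (K -> Prop) -> Prop)
    (D : K -> Prop) (g : (K -> K) -> (K -> Y)) :
  I D -> depends_only_on D g -> (forall y, exists x, g x = y) ->
  forall A : (K -> Y) -> Prop, I_analytic I A.
Proof.
  intros HD Hg Hsurj A.
  destruct (classic (exists a, A a)) as [[a0 Ha0] | Hempty].
  2: { left. intros y Hy. apply Hempty. now exists y. }
  right.
  set (retract := fun y => if excluded_middle_informative (A y) then y else a0).
  assert (Hretract_in : forall y, A (retract y)).
  { intros y. unfold retract. now destruct (excluded_middle_informative (A y)). }
  assert (Hretract_id : forall y, A y -> retract y = y).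
  { intros y Hy. unfold retract. now destruct (excluded_middle_informative (A y)). }
  exists (fun _ => True), (fun x => retract (g x)).
  split; [apply I_closed_full|]; split.
  - exact (I_continuous_of_depends_only_on I D _ HD (depends_only_on_comp D g retract Hg)).
  - intros y; split.
    + intros Hy. destruct (Hsurj y) as [x Hx].
      exists x. split; [exact Logic.I|]. subst y. now apply Hretract_id.
    + intros [x [_ Hx]]. subst y. apply Hretract_in.
Qed.

Lemma left_inverse_of_injective {A B : Type} (f : A -> B) :
  inhabited A -> injective f -> exists g : B -> A, forall a, g (f a) = a.
Proof.
  intros [a0] Hf.
  destruct (choice (fun b a => (exists a', f a' = b) -> f a = b)) as [g Hg].
  { intros b. destruct (classic (exists a', f a' = b)) as [[a Ha] | Hnone].
    - now exists a.
    - exists a0. intros Hsome. contradiction. }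
  exists g. intros a. apply Hf, Hg. now exists a.
Qed.

Section Recoding.

Variables (K Y : Type) (e : K -> K) (r : K -> Y).

Definition recode (x : K -> K) : K -> Y := fun k => r (x (e k)).

Lemma depends_only_on_recode (D : K -> Prop) :
  (forall k, D (e k)) -> depends_only_on D recode.
Proof.
  intros HeD x z Hxz. unfold recode.
  extensionality k. now rewrite (Hxz (e k) (HeD k)).
Qed.

Lemma recode_surjective :
  inhabited K -> injective e -> (forall y, exists k, r k = y) ->
  forall y : K -> Y, exists x, recode x = y.
Proof.
  intros HK He Hr y.
  destruct (left_inverse_of_injective e HK He) as [e' He'].
  destruct (choice (fun y0 k => r k = y0) Hr) as [s Hs].
  exists (fun j => s (y (e' j))).
  unfold recode. extensionality k. now rewrite He', Hs.
Qed.

End Recoding.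

Lemma injection_into_unbounded {K : Type} (lt : K -> K -> Prop) (D : K -> Prop) :
  (forall A : K -> Prop, small A -> bounded lt A) -> ~ bounded lt D ->
  exists e : K -> K, (forall k, D (e k)) /\ injective e.
Proof. intros Hregular HD. apply NNPP. intros Hsmall. exact (HD (Hregular D Hsmall)). Qed.

Lemma two_points_of_uncountable {K : Type} :
  ~ (exists f : K -> nat, injective f) -> exists k0 k1 : K, k0 <> k1.
Proof.
  intros Huncount. apply NNPP. intros Hsub.
  apply Huncount. exists (fun _ => 0). intros x y _.
  apply NNPP. intros Hxy. apply Hsub. now exists x, y.
Qed.

Lemma surjection_onto_bool_or_self {K Y : Type} (k0 k1 : K) :
  k0 <> k1 -> (Y = bool \/ Y = K) -> exists r : K -> Y, forall y, exists k, r k = y.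
Proof.
  intros Hk [-> | ->].
  - exists (fun k => if excluded_middle_informative (k = k0) then true else false).
    intros [|]; [exists k0 | exists k1];
      destruct excluded_middle_informative; congruence.
  - exists (fun k => k). intros y. now exists y.
Qed.

Theorem corollary5p3 (K : Type) (lt : K -> K -> Prop) (I : (K -> Prop) -> Prop)
  (Y : Type) :
  uncountable_regular_cardinal lt ->
  kappa_complete_proper_ideal lt I ->
  (exists A : K -> Prop, I A /\ ~ bounded lt A) ->
  (Y = bool \/ Y = K) ->
  forall A : (K -> Y) -> Prop, I_analytic I A.
Proof.
  intros [_ [_ [Huncount Hregular]]] _ [D [HD Hunbounded]] HY.
  destruct (injection_into_unbounded lt D Hregular Hunbounded) as [e [HeD He]].
  destruct (two_points_of_uncountable Huncount) as [k0 [k1 Hk]].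
  destruct (surjection_onto_bool_or_self k0 k1 Hk HY) as [r Hr].
  apply (I_analytic_of_surjective_map I D (recode K Y e r) HD).
  - exact (depends_only_on_recode K Y e r D HeD).
  - exact (recode_surjective K Y e r (inhabits k0) He Hr).
Qed.
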